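(* A set $\mathcal{K}\subseteq\mathcal{T}(\mathbb{B}_{\mathrm{parse}})$ of trees is recognizable in the tree algebra $\mathbf{T}(\mathbb{B}_{\mathrm{parse}})$ if and only if it is recognizable in the parse-tree algebra $\mathbf{P}$.
   Context: Fix a countably infinite set $\mathbb{S}$ of source labels and a set $\mathbb{A}$ of edge labels; HR operations on graphs: $\mathbf{0}_\sigma$, $\mathbf{a}_{(s_1,\ldots)}$, $\mathsf{restrict}_\sigma$, $\mathsf{rename}_\alpha$, $\parallel$ (the last fuses equally labelled sources of a disjoint union). Trees: with root label $\mathfrak{r}$, trees over an alphabet $\mathbb{B}$ of unary/binary edge labels are the graphs that are values of ground terms over $\mathbf{c}$ for unary $c$ (root with a unary $c$-edge), $\mathsf{append}_b$ for binary $b$ (new root with a $b$-edge to the old root), $\parallel$ (fusing roots); $\mathbf{T}(\mathbb{B})$ is the single-sorted algebra with these operations on the set $\mathcal{T}(\mathbb{B})$ of such trees. $\mathbb{B}_{\mathrm{parse}}$ consists of unary labels $\underline{\mathbf{0}}_\sigma$, $\underline{\mathbf{a}}_{(s_1,\ldots)}$ and binary labels $\underline{\mathsf{restrict}}_\sigma$, $\underline{\mathsf{rename}}_\alpha$ (one per HR operation). $\mathbf{P}$ is the single-sorted algebra over the HR signature with universe $\mathcal{T}(\mathbb{B}_{\mathrm{parse}})$, interpreting the HR constants as the one-node trees with the corresponding unary label, $\mathsf{restrict}_\sigma$ as $\mathsf{append}_{\underline{\mathsf{restrict}}_\sigma}$, $\mathsf{rename}_\alpha$ as $\mathsf{append}_{\underline{\mathsf{rename}}_\alpha}$,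 and $\parallel$ as root fusion. A set is recognizable in an algebra if it is $h^{-1}(C)$ for some homomorphism $h$ into a finite algebra over the same signature and some set $C$. *)

From HB Require Import structures.
From mathcomp Require Import all_boot.
From mathcomp Require Import finmap.
From Stdlib Require Import Permutation.

Set Implicit Arguments.
Unset Strict Implicit.
Unset Printing Implicit Defensive.

Local Open Scope fset_scope.

(* A tree (a graph with a root source r) is represented by its root:    *)
(* the list of labels of the unary edges at the root and the list of    *)
(* outgoing binary edges (label, subtree).  Trees are graphs taken up   *)
(* to isomorphism; isomorphism of such rooted trees is [tiso] below     *)
(* (permutation of unary edges and of children, recursively).           *)

Inductive rtree (U Bi : Type) : Type :=
  TNode : seq U -> seq (Bi * rtree U Bi) -> rtree U Bi.

Inductive tiso (U Bi : Type) : rtree U Bi -> rtree U Bi -> Prop :=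
  | tisoN (us us' : seq U) (ch ch' : seq (Bi * rtree U Bi)) :
      Permutation us us' ->
      (exists ch'', Permutation ch' ch'' /\
         List.Forall2 (fun p q => p.1 = q.1 /\ tiso p.2 q.2) ch ch'') ->
      tiso (TNode us ch) (TNode us' ch').

(* The tree graphs that are values of ground terms over c, append_b and ||:
   every node carries at least one (unary or outgoing binary) edge. *)
Inductive wf (U Bi : Type) : rtree U Bi -> Prop :=
  | wfN (us : seq U) (ch : seq (Bi * rtree U Bi)) :
      (us <> [::] \/ ch <> [::]) ->
      (forall p, List.In p ch -> wf p.2) ->
      wf (TNode us ch).

Definition ptree (U Bi : Type) := {t : rtree U Bi | wf t}.

Definition tree_eq (U Bi : Type) (t t' : ptree U Bi) : Prop :=
  tiso (proj1_sig t) (proj1_sig t').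

Definition leaf_r (U Bi : Type) (c : U) : rtree U Bi := TNode [:: c] [::].
Definition append_r (U Bi : Type) (b : Bi) (t : rtree U Bi) : rtree U Bi :=
  TNode [::] [:: (b, t)].
Definition par_r (U Bi : Type) (t1 t2 : rtree U Bi) : rtree U Bi :=
  match t1, t2 with TNode u1 c1, TNode u2 c2 => TNode (u1 ++ u2) (c1 ++ c2) end.

Lemma wf_leaf (U Bi : Type) (c : U) : wf (leaf_r Bi c).
Proof. constructor; first by left. by []. Qed.

Lemma wf_append (U Bi : Type) (b : Bi) (t : rtree U Bi) : wf t -> wf (append_r b t).
Proof. move=> Ht; constructor; first by right. by move=> p [<-|[]]. Qed.

Lemma wf_par (U Bi : Type) (t1 t2 : rtree U Bi) : wf t1 -> wf t2 -> wf (par_r t1 t2).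
Proof.
case=> u1 c1 H1 W1; case=> u2 c2 H2 W2; constructor.
  case: H1 => H; [left|right]; [by case: u1 H | by case: c1 H {W1}].
move=> p Hp; case: (List.in_app_or _ _ _ Hp) => H; [exact: W1|exact: W2].
Qed.

Definition tleaf (U Bi : Type) (c : U) : ptree U Bi := exist _ _ (wf_leaf Bi c).
Definition tappend (U Bi : Type) (b : Bi) (t : ptree U Bi) : ptree U Bi :=
  exist _ _ (wf_append b (proj2_sig t)).
Definition tpar (U Bi : Type) (t1 t2 : ptree U Bi) : ptree U Bi :=
  exist _ _ (wf_par (proj2_sig t1) (proj2_sig t2)).

Record alg (C Un : Type) := Alg {
  car : Type;
  car_eq : car -> car -> Prop;   (* equality of the universe (quotient) *)
  acst : C -> car;
  aun : Un -> car -> car;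
  abin : car -> car -> car }.

Definition recognizable (C Un : Type) (X : alg C Un) (K : car X -> Prop) : Prop :=
  exists (F : finType) (cF : C -> F) (uF : Un -> F -> F) (bF : F -> F -> F)
         (h : car X -> F) (Cs : F -> Prop),
    (forall x y, car_eq x y -> h x = h y) /\
    (forall c, h (acst X c) = cF c) /\
    (forall u x, h (aun u x) = uF u (h x)) /\
    (forall x y, h (abin x y) = bF (h x) (h y)) /\
    (forall x, K x <-> Cs (h x)).

Arguments recognizable {C Un} X K.

Definition tree_alg (U Bi : Type) : alg U Bi :=
  @Alg U Bi (ptree U Bi) (@tree_eq U Bi) (@tleaf U Bi) (@tappend U Bi) (@tpar U Bi).

Definition fsperm (S : Type) :=
  {alpha : S -> S | bijective alpha /\
     exists supp : seq S, forall x, ~ List.In x supp -> alpha x = x}.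

(* HR constants: 0_sigma, and a_(s1,...,sk) with distinct sources *)
Inductive hr_const (S : choiceType) (A : Type) : Type :=
  | HZero of {fset S}
  | HAtom of A & {s : seq S | uniq s}.

(* HR unary operations: restrict_sigma and rename_alpha
   (the binary operation is parallel composition ||) *)
Inductive hr_unop (S : choiceType) : Type :=
  | HRestrict of {fset S}
  | HRename of fsperm S.

(* B_parse: one unary label per HR constant, one binary label per
   unary HR operation *)
Inductive parse_unary (S : choiceType) (A : Type) : Type :=
  | ul_const of hr_const S A.
Inductive parse_binary (S : choiceType) : Type :=
  | ul_unop of hr_unop S.

Definition parse_tree (S : choiceType) (A : Type) :=
  ptree (parse_unary S A) (parse_binary S).

Definition T_parse (S : choiceType) (A : Type) :
  alg (parse_unary S A) (parse_binary S) :=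
  tree_alg (parse_unary S A) (parse_binary S).

Definition P_alg (S : choiceType) (A : Type) : alg (hr_const S A) (hr_unop S) :=
  @Alg (hr_const S A) (hr_unop S) (parse_tree S A)
       (@tree_eq (parse_unary S A) (parse_binary S))
       (fun c => tleaf (parse_binary S) (ul_const c))
       (fun u t => tappend (ul_unop u) t)
       (@tpar (parse_unary S A) (parse_binary S)).

(* P and T(B_parse) have the same universe, the same equality and the same
   binary operation (root fusion), and every other operation of either one is
   an operation of the other under the bijection between HR symbols and the
   labels of B_parse.  A homomorphism into a finite algebra for one signature
   is thus a homomorphism for the other once the finite algebra's operations
   are relabelled the same way. *)

From mathcomp Require Import all_boot.

Section Reindex.

Variables (T : Type) (eqT : T -> T -> Prop) (bin : T -> T -> T).
Variables (C Un C' Un' : Type) (fc : C -> C') (fu : Un -> Un').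
Variables (cst : C -> T) (un : Un -> T -> T).
Variables (cst' : C' -> T) (un' : Un' -> T -> T).

Hypothesis cstE : forall c, cst c = cst' (fc c).
Hypothesis unE : forall u x, un u x = un' (fu u) x.

Lemma recognizable_reindex (K : T -> Prop) :
  recognizable (Alg eqT cst' un' bin) K -> recognizable (Alg eqT cst un bin) K.
Proof.
move=> [F [cF [uF [bF [h [Cs [h_eq [h_cst [h_un [h_bin h_K]]]]]]]]]].
exists F, (cF \o fc), (uF \o fu), bF, h, Cs; split=> //.
split; first by move=> c /=; rewrite cstE h_cst.
by split=> // u x /=; rewrite unE h_un.
Qed.

End Reindex.

Arguments recognizable_reindex {T eqT bin C Un C' Un'} fc fu {cst un cst' un'}.

Definition hr_of_parse_unary (S : choiceType) (A : Type)
  (p : parse_unary S A) : hr_const S A :=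
  let: ul_const c := p in c.

Definition hr_of_parse_binary (S : choiceType) (p : parse_binary S) : hr_unop S :=
  let: ul_unop u := p in u.

Theorem lemma5p3 (S : countType) (HS : exists f : nat -> S, injective f)
  (A : Type) (K : parse_tree S A -> Prop)
  (HK : forall t t', tree_eq t t' -> (K t <-> K t')) :
  recognizable (T_parse S A) K <-> recognizable (P_alg S A) K.
Proof.
rewrite /T_parse /P_alg /tree_alg; split.
- exact: (recognizable_reindex (@ul_const S A) (@ul_unop S)).
- by apply: (recognizable_reindex (@hr_of_parse_unary S A) (@hr_of_parse_binary S));
    case.
Qed.
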